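(* Fix $\phi\in\mathbb{R}^d$ with $\mu=\|\phi\|^2>0$, a one-hot label ${\bm y}\in\{0,1\}^V$, softmax cross-entropy $f({\bm z},{\bm y})=-\sum_k y_k\log p_k({\bm z})$, $\kappa\ge 0$, $|\eta|\in(0,1]$, $|\rho|\le\kappa\sqrt{|\eta|}$, and set $\eta'=\eta\mu$. Given ${\bm W}^t$, let ${\bm z}^t={\bm W}^t\phi$, ${\bm p}^t=\mathrm{softmax}({\bm z}^t)$, ${\bm g}^t={\bm p}^t-{\bm y}$, ${\bm H}^t_{{\bm z}}=\mathrm{diag}({\bm p}^t)-{\bm p}^t({\bm p}^t)^\top$, $\tilde\rho^{\,t}=\rho\sqrt\mu/\|{\bm g}^t\|$ ($0$ if ${\bm g}^t=0$). With $F({\bm W})=f({\bm W}\phi,{\bm y})$, let the GD update be ${\bm W}^{t+1}(\mathrm{GD})={\bm W}^t-\eta\nabla F({\bm W}^t)$ and the SAM update be ${\bm W}^{t+1}(\mathrm{SAM})={\bm W}^t-\eta\nabla F({\bm W}^t+\rho\nabla F({\bm W}^t)/\|\nabla F({\bm W}^t)\|)$ (perturbation $0$ if ${\bm g}^t=0$), let ${\bm p}^{t+1}(a)=\mathrm{softmax}({\bm W}^{t+1}(a)\phi)$ and $\alpha_i^{(a)}=p_i^{t+1}(a)/p_i^t$ for $a\in\{\mathrm{GD},\mathrm{SAM}\}$, $i\in[V]$. Then for each $i$, $$\alpha_i^{(a)}=\frac{\sum_{j=1}^V e^{z_j^t}}{\sum_{j=1}^V\beta_j^{(a)}e^{z_j^t}},$$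 where $\beta_j^{\mathrm{GD}}=\exp\{-\eta'[(p_j^t-y_j)-(p_i^t-y_i)]\}$ and $$\beta_j^{\mathrm{SAM}}=\beta_j^{\mathrm{GD}}\cdot\exp\{-\eta'\tilde\rho^{\,t}\Delta^t_{j,i}\}\cdot\exp\{r_j^t-r_i^t\},\qquad \Delta^t_{j,i}=({\bm H}^t_{{\bm z}}{\bm g}^t)_j-({\bm H}^t_{{\bm z}}{\bm g}^t)_i,$$ with ${\bm r}^t={\bm W}^{t+1}(\mathrm{SAM})\phi-{\bm z}^t+\eta'({\bm g}^t+\tilde\rho^{\,t}{\bm H}^t_{{\bm z}}{\bm g}^t)$; and there is a constant $C_1>0$ depending only on $(L,\mu,\kappa)$ (where $L$ is a uniform bound on the norms of the first three ${\bm z}$-derivatives of $f$) such that $e^{-2C_1\eta^2}\le\exp\{r_j^t-r_i^t\}\le e^{2C_1\eta^2}$ for all $i,j$.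
   Context: $\|\cdot\|$ is Euclidean/Frobenius norm. $\nabla F({\bm W})=({\bm p}({\bm W}\phi)-{\bm y})\phi^\top$. *)

From HB Require Import structures.
From mathcomp Require Import all_boot all_order all_algebra.
From mathcomp Require Import all_classical all_reals all_analysis.
Set Implicit Arguments. Unset Strict Implicit. Unset Printing Implicit Defensive.
Import Order.TTheory GRing.Theory Num.Theory.
Import numFieldNormedType.Exports.
Local Open Scope ring_scope.

Section Defs.
Variable R : realType.

Definition enorm (m n : nat) (A : 'M[R]_(m, n)) : R :=
  Num.sqrt (\sum_(i < m) \sum_(j < n) A i j ^+ 2).

Definition softmax (V : nat) (z : 'cV[R]_V) : 'cV[R]_V :=
  \col_i (expR (z i 0) / \sum_(j < V) expR (z j 0)).

Definition xent (V : nat) (z y : 'cV[R]_V) : R :=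
  - \sum_(k < V) y k 0 * ln (softmax z k 0).

Definition one_hot (V : nat) (y : 'cV[R]_V) : Prop :=
  exists k : 'I_V, forall i : 'I_V, y i 0 = (i == k)%:R.

Definition gradF (V d : nat) (phi : 'cV[R]_d) (y : 'cV[R]_V) (W : 'M[R]_(V, d))
  : 'M[R]_(V, d) := (softmax (W *m phi) - y) *m phi^T.

Definition Hz (V : nat) (p : 'cV[R]_V) : 'M[R]_V :=
  diag_mx p^T - p *m p^T.

Definition W_GD (V d : nat) (phi : 'cV[R]_d) (y : 'cV[R]_V) (eta : R)
  (W : 'M[R]_(V, d)) : 'M[R]_(V, d) := W - eta *: gradF phi y W.

Definition W_SAM (V d : nat) (phi : 'cV[R]_d) (y : 'cV[R]_V) (eta rho : R)
  (W : 'M[R]_(V, d)) : 'M[R]_(V, d) :=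
  let G := gradF phi y W in
  let g := softmax (W *m phi) - y in
  let pert := if g == 0 then 0 else (rho / enorm G) *: G in
  W - eta *: gradF phi y (W + pert).

Definition rho_tilde (V : nat) (rho mu : R) (g : 'cV[R]_V) : R :=
  if g == 0 then 0 else rho * Num.sqrt mu / enorm g.

(* L uniformly bounds the norms of the first three derivatives of
   z |-> f(z, y) (norms of the 1-, 2-, 3-linear forms, i.e. sup over
   Euclidean-unit directions of the directional derivatives). *)
Definition xent_deriv_bound (V : nat) (y : 'cV[R]_V) (L : R) : Prop :=
  let f := fun z : 'cV[R]_V => xent z y in
  forall (z u v w : 'cV[R]_V),
    enorm u = 1 -> enorm v = 1 -> enorm w = 1 ->
    [/\ `| 'D_u f z | <= L,
        `| 'D_v ('D_u f) z | <= L
      & `| 'D_w ('D_v ('D_u f)) z | <= L].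

End Defs.

From HB Require Import structures.
From mathcomp Require Import all_boot all_order all_algebra.
From mathcomp Require Import all_classical all_reals all_analysis.
From mathcomp Require Import ring lra.
Import Order.TTheory GRing.Theory Num.Theory.
Import numFieldNormedType.Exports.
Set Implicit Arguments. Unset Strict Implicit.
Local Open Scope ring_scope.

(* Since [gradF W *m phi = mu *: g], every update of [W] along a gradient of
   [F] moves the logits along a gradient of the cross-entropy in [z].  For GD
   this is the exact step [z - eta' g], and the formula for [alpha_i] is the
   shift invariance of softmax.  For SAM the perturbation moves the logits by
   [rho_tilde * g], whose entries are at most [|rho| sqrt mu]; then [r] is
   [-eta'] times the remainder of the first-order expansion of softmax at [z]
   (whose Jacobian is [Hz p]), which is [O(rho^2 mu) = O(kappa^2 |eta| mu)]. *)

Section Softmax.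
Variable R : realType.

Lemma expR_sub1Dx_bounds (x : R) :
  `|x| <= 1/2 -> 0 <= expR x - 1 - x <= 2 * x ^+ 2.
Proof.
rewrite ler_norml => /andP[hx1 hx2].
have ge1Dx := expR_ge1Dx x; have ge1Nx := expR_ge1Dx (- x).
have expRxN : expR x * expR (- x) = 1 by rewrite -expRD subrr expR0.
have ex_gt0 := expR_gt0 x.
have ex_mul_le1 : expR x * (1 - x) <= 1 by rewrite -expRxN ler_wpM2l; lra.
apply/andP; split; [lra | nra].
Qed.

Lemma weighted_avg_bounds (I : finType) (w x : I -> R) (lo hi : R) :
  (forall k, 0 <= w k) -> \sum_k w k = 1 -> (forall k, lo <= x k <= hi) ->
  lo <= \sum_k w k * x k <= hi.
Proof.
move=> w_ge0 w_sum1 x_bnd; apply/andP; split.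
- rewrite -[lo]mul1r -w_sum1 mulr_suml; apply: ler_sum => k _.
  by rewrite ler_wpM2l //; case/andP: (x_bnd k).
- rewrite -[hi]mul1r -w_sum1 mulr_suml; apply: ler_sum => k _.
  by rewrite ler_wpM2l //; case/andP: (x_bnd k).
Qed.

Lemma sum_expR_gt0 V (z : 'cV[R]_V) (i : 'I_V) : 0 < \sum_(j < V) expR (z j 0).
Proof.
rewrite (bigD1 i) //= ltr_pwDl ?expR_gt0 //.
by apply: sumr_ge0 => j _; exact/ltW/expR_gt0.
Qed.

Lemma softmax_gt0 V (z : 'cV[R]_V) (i : 'I_V) : 0 < softmax z i 0.
Proof. by rewrite mxE divr_gt0 ?expR_gt0 ?(sum_expR_gt0 z i). Qed.

Lemma softmax_sum1 V (z : 'cV[R]_V) (i : 'I_V) : \sum_(k < V) softmax z k 0 = 1.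
Proof.
under eq_bigr do rewrite mxE.
by rewrite -mulr_suml divff // lt0r_neq0 ?(sum_expR_gt0 z i).
Qed.

Lemma softmax_le1 V (z : 'cV[R]_V) (i : 'I_V) : softmax z i 0 <= 1.
Proof.
rewrite -(softmax_sum1 z i) (bigD1 i) //= lerDl.
by apply: sumr_ge0 => j _; exact/ltW/softmax_gt0.
Qed.

Lemma softmax_ratio V (z z' : 'cV[R]_V) (i : 'I_V) (b : 'I_V -> R) :
  (forall j, b j = expR ((z' j 0 - z j 0) - (z' i 0 - z i 0))) ->
  softmax z' i 0 / softmax z i 0 =
  (\sum_(j < V) expR (z j 0)) / (\sum_(j < V) b j * expR (z j 0)).
Proof.
move=> bE.
have -> : \sum_(j < V) b j * expR (z j 0) =
          (\sum_(j < V) expR (z' j 0)) * expR (z i 0 - z' i 0).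
  by rewrite mulr_suml; apply: eq_bigr => j _; rewrite bE -!expRD; congr expR; ring.
have S_gt0 := sum_expR_gt0 z i; have S'_gt0 := sum_expR_gt0 z' i.
have zi_split : expR (z i 0) = expR (z i 0 - z' i 0) * expR (z' i 0).
  by rewrite -expRD subrK.
rewrite !mxE zi_split.
have := expR_gt0 (z i 0 - z' i 0); have := expR_gt0 (z' i 0) => ? ?.
by field; rewrite !lt0r_neq0.
Qed.

Lemma softmax_ratio_GD V (z q y : 'cV[R]_V) (c : R) (i : 'I_V) :
  softmax (z - c *: (q - y)) i 0 / softmax z i 0 =
  (\sum_(j < V) expR (z j 0)) /
  (\sum_(j < V) expR (- c * ((q j 0 - y j 0) - (q i 0 - y i 0))) * expR (z j 0)).
Proof. by apply: softmax_ratio => j; rewrite !mxE; congr expR; ring. Qed.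

Lemma softmax_ratio_SAM V (z z' q y h : 'cV[R]_V) (c t : R) (i : 'I_V) :
  let r := z' - z + c *: ((q - y) + t *: h) in
  softmax z' i 0 / softmax z i 0 =
  (\sum_(j < V) expR (z j 0)) /
  (\sum_(j < V) expR (- c * ((q j 0 - y j 0) - (q i 0 - y i 0)))
     * expR (- c * t * (h j 0 - h i 0)) * expR (r j 0 - r i 0) * expR (z j 0)).
Proof. by apply: softmax_ratio => j; rewrite !mxE -!expRD; congr expR; ring. Qed.

Lemma softmax_shift V (z dl : 'cV[R]_V) (j : 'I_V) :
  softmax (z + dl) j 0 =
  softmax z j 0 * expR (dl j 0) / \sum_(k < V) softmax z k 0 * expR (dl k 0).
Proof.
have S_gt0 := sum_expR_gt0 z j.
have -> : \sum_(k < V) softmax z k 0 * expR (dl k 0) =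
          (\sum_(k < V) expR ((z + dl) k 0)) / \sum_(k < V) expR (z k 0).
  by rewrite mulr_suml; apply: eq_bigr => k _; rewrite !mxE expRD mulrAC.
have := sum_expR_gt0 (z + dl) j => S'_gt0.
rewrite !mxE expRD; field; rewrite !lt0r_neq0 //.
Qed.

Lemma linearization_error_small (p d m a A c : R) :
  0 < p <= 1 -> c <= 1/2 -> `|d| <= c -> `|m| <= c ->
  0 <= a <= 2 * c ^+ 2 -> 0 <= A <= 2 * c ^+ 2 ->
  `|p * (1 + d + a) / (1 + m + A) - p - p * (d - m)| <= 16 * c ^+ 2.
Proof.
move=> /andP[p_gt0 p_le1] c_small + + /andP[a_ge0 a_le] /andP[A_ge0 A_le].
rewrite ler_norml => /andP[d_lo d_hi]; rewrite ler_norml => /andP[m_lo m_hi].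
have den_ge : 1/2 <= 1 + m + A by lra.
set N := a - A - d * m - d * A + m ^+ 2 + m * A.
have -> : p * (1 + d + a) / (1 + m + A) - p - p * (d - m) = p * N / (1 + m + A).
  by rewrite /N; field; apply: lt0r_neq0; lra.
have N_le : `|N| <= 8 * c ^+ 2 by rewrite /N ler_norml; apply/andP; split; nra.
rewrite normrM normfV (gtr0_norm (_ : 0 < 1 + m + A)); last lra.
rewrite normrM (gtr0_norm p_gt0) ler_pdivrMr; last lra.
have := normr_ge0 N; nra.
Qed.

Lemma linearization_error_large (p q d m c : R) :
  0 <= p <= 1 -> 0 <= q <= 1 -> 1/2 < c -> `|d| <= c -> `|m| <= c ->
  `|q - p - p * (d - m)| <= 16 * c ^+ 2.
Proof.
move=> /andP[p_ge0 p_le1] /andP[q_ge0 q_le1] c_large.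
rewrite ler_norml => /andP[d_lo d_hi]; rewrite ler_norml => /andP[m_lo m_hi].
have c_sq : 2 + 2 * c <= 16 * c ^+ 2 by nra.
rewrite ler_norml; apply/andP; split; nra.
Qed.

(* The linear term is [(Hz (softmax z) *m dl) j 0]. *)
Definition softmax_remainder V (z dl : 'cV[R]_V) (j : 'I_V) : R :=
  softmax (z + dl) j 0 - softmax z j 0
  - softmax z j 0 * (dl j 0 - \sum_(k < V) softmax z k 0 * dl k 0).

Lemma softmax_remainder_le V (z dl : 'cV[R]_V) (c : R) (j : 'I_V) :
  (forall k, `|dl k 0| <= c) -> `|softmax_remainder z dl j| <= 16 * c ^+ 2.
Proof.
move=> dl_le; pose p k := softmax z k 0.
have p_ge0 k : 0 <= p k by exact/ltW/softmax_gt0.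
have p_sum1 : \sum_(k < V) p k = 1 by exact: softmax_sum1.
have c_ge0 : 0 <= c by exact: le_trans (dl_le j).
set m := \sum_(k < V) p k * dl k 0.
have m_le : `|m| <= c.
  by rewrite ler_norml weighted_avg_bounds // => k; rewrite -ler_norml.
have [c_small | c_large] := lerP c (1/2); last first.
  apply: linearization_error_large m_le => //; rewrite ?softmax_le1 ?ltW ?softmax_gt0 //.
pose a k := expR (dl k 0) - 1 - dl k 0.
have a_bnd k : 0 <= a k <= 2 * c ^+ 2.
  have /andP[a_ge0 a_le] := expR_sub1Dx_bounds (le_trans (dl_le k) c_small).
  rewrite a_ge0 (le_trans a_le) // ler_pM2l // -real_normK ?num_real //.
  by rewrite lerXn2r ?nnegrE // (dl_le k).
have A_bnd : 0 <= \sum_(k < V) p k * a k <= 2 * c ^+ 2 by exact: weighted_avg_bounds.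
have expR_dl k : expR (dl k 0) = 1 + dl k 0 + a k by rewrite /a; ring.
have den : \sum_(k < V) p k * expR (dl k 0) = 1 + m + \sum_(k < V) p k * a k.
  by rewrite /m -p_sum1 -!big_split /=; apply: eq_bigr => k _; rewrite expR_dl; ring.
rewrite /softmax_remainder softmax_shift -/(p j) den expR_dl.
by apply: linearization_error_small; rewrite ?dl_le ?softmax_gt0 ?softmax_le1.
Qed.

End Softmax.

Section GradientSteps.
Variable R : realType.

Lemma enorm_col_sqr n (v : 'cV[R]_n) : enorm v ^+ 2 = \sum_(k < n) v k 0 ^+ 2.
Proof.
rewrite sqr_sqrtr; last by do 2!(apply: sumr_ge0 => ? _); exact: sqr_ge0.
by apply: eq_bigr => k _; rewrite big_ord1.
Qed.

Lemma enorm_col_entry_le n (v : 'cV[R]_n) k : `|v k 0| <= enorm v.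
Proof.
rewrite -sqrtr_sqr ler_sqrt; last by do 2!(apply: sumr_ge0 => ? _); exact: sqr_ge0.
rewrite (bigD1 k) //= big_ord1 lerDl.
by do 2!(apply: sumr_ge0 => ? _); exact: sqr_ge0.
Qed.

Lemma enorm_col_gt0 n (v : 'cV[R]_n) : v != 0 -> 0 < enorm v.
Proof.
move=> v_neq0; rewrite lt_def sqrtr_ge0 andbT; apply: (contra_neq _ v_neq0) => v0.
apply/matrixP => i j; rewrite !ord1 mxE; apply: normr0_eq0; apply/eqP.
by rewrite eq_le normr_ge0 andbT -v0 enorm_col_entry_le.
Qed.

Lemma trmx_mul_col n (v : 'cV[R]_n) : v^T *m v = (enorm v ^+ 2)%:M.
Proof.
apply/matrixP => a b; rewrite !ord1 !mxE enorm_col_sqr mulr1n.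
by apply: eq_bigr => k _; rewrite mxE expr2.
Qed.

Lemma enorm_mul_tr m n (u : 'cV[R]_m) (v : 'cV[R]_n) :
  enorm (u *m v^T) = enorm u * enorm v.
Proof.
rewrite [LHS]/enorm (_ : \sum_(i < m) _ = (enorm u * enorm v) ^+ 2).
  by rewrite sqrtr_sqr ger0_norm // mulr_ge0 ?sqrtr_ge0.
rewrite exprMn !enorm_col_sqr mulr_suml; apply: eq_bigr => i _.
by rewrite mulr_sumr; apply: eq_bigr => j _; rewrite !mxE big_ord1 !mxE exprMn.
Qed.

Lemma gradF_mul_phi V d (phi : 'cV[R]_d) (y : 'cV[R]_V) (W : 'M[R]_(V, d)) :
  gradF phi y W *m phi = (enorm phi ^+ 2) *: (softmax (W *m phi) - y).
Proof. by rewrite /gradF -mulmxA trmx_mul_col mul_mx_scalar. Qed.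

Lemma W_GD_mul_phi V d (phi : 'cV[R]_d) (y : 'cV[R]_V) (eta : R) (W : 'M[R]_(V, d)) :
  W_GD phi y eta W *m phi =
  W *m phi - (eta * enorm phi ^+ 2) *: (softmax (W *m phi) - y).
Proof. by rewrite mulmxBl -scalemxAl gradF_mul_phi scalerA. Qed.

(* The key identity is [||gradF W|| = ||g|| ||phi|| = ||g|| sqrt mu]. *)
Lemma W_SAM_mul_phi V d (phi : 'cV[R]_d) (y : 'cV[R]_V) (eta rho : R)
    (W : 'M[R]_(V, d)) :
  let mu := enorm phi ^+ 2 in
  let g := softmax (W *m phi) - y in
  W_SAM phi y eta rho W *m phi =
  W *m phi - (eta * mu) *: (softmax (W *m phi + rho_tilde rho mu g *: g) - y).
Proof.
move=> mu g; rewrite /W_SAM /rho_tilde -/g mulmxBl -scalemxAl gradF_mul_phi.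
rewrite scalerA -/mu; case: ifP => _; first by rewrite addr0 scale0r addr0.
rewrite mulmxDl -scalemxAl gradF_mul_phi -/mu -/g scalerA.
suff -> : rho / enorm (gradF phi y W) * mu = rho * Num.sqrt mu / enorm g by [].
rewrite /gradF -/g enorm_mul_tr /mu sqrtr_sqr ger0_norm ?sqrtr_ge0 //.
have [->|phi_neq0] := eqVneq (enorm phi) 0; first by rewrite expr2 !mulr0 mul0r.
by rewrite invfM; set ig := (enorm g)^-1; field.
Qed.

Lemma Hz_mulE V (p g : 'cV[R]_V) j :
  (Hz p *m g) j 0 = p j 0 * g j 0 - p j 0 * \sum_(k < V) p k 0 * g k 0.
Proof.
rewrite /Hz mulmxBl mul_diag_mx -mulmxA !mxE big_ord1 !mxE.
by congr (_ - _ * _); apply: eq_bigr => k _; rewrite !mxE.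
Qed.

Definition SAM_residual V d (phi : 'cV[R]_d) (y : 'cV[R]_V) (eta rho : R)
    (W : 'M[R]_(V, d)) : 'cV[R]_V :=
  let mu := enorm phi ^+ 2 in
  let p := softmax (W *m phi) in
  let g := p - y in
  W_SAM phi y eta rho W *m phi - W *m phi
  + (eta * mu) *: (g + rho_tilde rho mu g *: (Hz p *m g)).

Lemma SAM_residualE V d (phi : 'cV[R]_d) (y : 'cV[R]_V) (eta rho : R)
    (W : 'M[R]_(V, d)) j :
  let mu := enorm phi ^+ 2 in
  let g := softmax (W *m phi) - y in
  SAM_residual phi y eta rho W j 0 =
  - (eta * mu) * softmax_remainder (W *m phi) (rho_tilde rho mu g *: g) j.
Proof.
move=> mu g; rewrite /SAM_residual W_SAM_mul_phi -/mu -/g /softmax_remainder.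
set rt := rho_tilde rho mu g; set z := W *m phi; set p := softmax z.
have HgE := Hz_mulE p g j.
have gE : g j 0 = p j 0 - y j 0.
  by rewrite /g /p /z; move: (softmax _) => q; rewrite !mxE.
set p' := softmax (z + rt *: g); set Hg := Hz p *m g in HgE *.
(* Opaque names keep [mxE] from unfolding softmax and the matrix product. *)
clearbody p' Hg rt g p z.
have sumE : \sum_(k < V) p k 0 * (rt *: g) k 0 = rt * \sum_(k < V) p k 0 * g k 0.
  by rewrite mulr_sumr; apply: eq_bigr => k _; rewrite mxE mulrCA.
rewrite !mxE HgE sumE gE; ring.
Qed.

Lemma rho_tilde_scale_entry_le V (rho mu : R) (g : 'cV[R]_V) k :
  `|(rho_tilde rho mu g *: g) k 0| <= `|rho| * Num.sqrt mu.
Proof.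
rewrite mxE normrM /rho_tilde; have [_|g_neq0] := eqVneq g 0.
  by rewrite normr0 mul0r mulr_ge0 ?sqrtr_ge0.
have g_gt0 := enorm_col_gt0 g_neq0.
rewrite normrM normfV (gtr0_norm g_gt0) normrM (ger0_norm (sqrtr_ge0 mu)).
by rewrite mulrAC ler_pdivrMr // ler_wpM2l ?mulr_ge0 ?sqrtr_ge0 ?enorm_col_entry_le.
Qed.

Lemma SAM_residual_diff_le V d (phi : 'cV[R]_d) (y : 'cV[R]_V) (eta rho kappa : R)
    (W : 'M[R]_(V, d)) i j :
  0 <= kappa -> `|rho| <= kappa * Num.sqrt `|eta| ->
  `|SAM_residual phi y eta rho W j 0 - SAM_residual phi y eta rho W i 0|
    <= 32 * (enorm phi ^+ 2 * kappa) ^+ 2 * eta ^+ 2.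
Proof.
move=> kappa_ge0 rho_le; rewrite !SAM_residualE -mulrBr normrM normrN normrM.
set mu := enorm phi ^+ 2; set c := `|rho| * Num.sqrt mu.
have mu_ge0 : 0 <= mu by exact: sqr_ge0.
have c2_le : c ^+ 2 <= kappa ^+ 2 * `|eta| * mu.
  rewrite exprMn sqr_sqrtr // ler_wpM2r // -(sqr_sqrtr (normr_ge0 eta)) -exprMn.
  by rewrite lerXn2r ?nnegrE ?mulr_ge0 ?sqrtr_ge0.
have rem_le k :
    `|softmax_remainder (W *m phi)
        (rho_tilde rho mu (softmax (W *m phi) - y) *: (softmax (W *m phi) - y)) k|
    <= 16 * c ^+ 2.
  exact/softmax_remainder_le/rho_tilde_scale_entry_le.
have diff_le := le_trans (ler_normB _ _) (lerD (rem_le j) (rem_le i)).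
rewrite (ger0_norm mu_ge0) -[eta ^+ 2]real_normK ?num_real //.
have eta_mu_ge0 : 0 <= `|eta| * mu by rewrite mulr_ge0.
apply: le_trans (ler_wpM2l eta_mu_ge0 diff_le) _; nra.
Qed.

End GradientSteps.

Unset Implicit Arguments.

Theorem lemma2 (R : realType) (L mu kappa : R) :
  0 < mu -> 0 <= kappa ->
  exists C1 : R, 0 < C1 /\
  forall (V d : nat) (phi : 'cV[R]_d) (y : 'cV[R]_V) (eta rho : R)
         (W : 'M[R]_(V, d)),
    enorm phi ^+ 2 = mu ->
    one_hot y ->
    xent_deriv_bound y L ->
    0 < `|eta| <= 1 ->
    `|rho| <= kappa * Num.sqrt `|eta| ->
    let eta' := eta * mu in
    let z := W *m phi in
    let p := softmax z in
    let g := p - y in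
    let H := Hz p in
    let rt := rho_tilde rho mu g in
    let p_GD := softmax (W_GD phi y eta W *m phi) in
    let p_SAM := softmax (W_SAM phi y eta rho W *m phi) in
    let r := W_SAM phi y eta rho W *m phi - z + eta' *: (g + rt *: (H *m g)) in
    let beta_GD := fun i j : 'I_V =>
      expR (- eta' * ((p j 0 - y j 0) - (p i 0 - y i 0))) in
    let Delta := fun j i : 'I_V => (H *m g) j 0 - (H *m g) i 0 in
    let beta_SAM := fun i j : 'I_V =>
      beta_GD i j * expR (- eta' * rt * Delta j i) * expR (r j 0 - r i 0) in
    (forall i : 'I_V,
       p_GD i 0 / p i 0 =
         (\sum_(j < V) expR (z j 0)) / (\sum_(j < V) beta_GD i j * expR (z j 0))
     /\ p_SAM i 0 / p i 0 =
         (\sum_(j < V) expR (z j 0)) / (\sum_(j < V) beta_SAM i j * expR (z j 0)))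
    /\ (forall i j : 'I_V,
          expR (- (2 * C1 * eta ^+ 2)) <= expR (r j 0 - r i 0)
          /\ expR (r j 0 - r i 0) <= expR (2 * C1 * eta ^+ 2)).
Proof.
move=> _ kappa_ge0; exists (16 * (mu * kappa) ^+ 2 + 1).
split; first by have := sqr_ge0 (mu * kappa); lra.
move=> V d phi y eta rho W <- _ _ _ rho_le eta' z p g H rt p_GD p_SAM r beta_GD Delta beta_SAM.
split.
  move=> i; split; last exact: softmax_ratio_SAM.
  by rewrite /p_GD W_GD_mul_phi softmax_ratio_GD.
move=> i j; have := SAM_residual_diff_le phi y W i j kappa_ge0 rho_le.
rewrite ler_norml !ler_expR => /andP[diff_lo diff_hi].
have := sqr_ge0 eta; split; nra.
Qed.
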